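(* Let $N$ be a binoid and let $$\infty\to S_1\xrightarrow{\phi_2}S_2\xrightarrow{\phi_3}\cdots\xrightarrow{\phi_n}S_n\to\infty$$ be a strongly exact sequence of finite $N$-sets. Then $\sum_{i=1}^n(-1)^i\,\#S_i=0$.
   Context: A binoid $(N,+,0,\infty)$ is a commutative monoid $(N,+,0)$ with an element $\infty$ satisfying $a+\infty=\infty$ for all $a\in N$. An $N$-set is a pointed set $(S,p)$ with a map $N\times S\to S$, $(n,s)\mapsto n+s$, such that $(n+m)+s=n+(m+s)$, $0+s=s$, $\infty+s=p$ and $n+p=p$; a homomorphism of $N$-sets is a map $\phi$ with $\phi(p)=p$ and $\phi(n+s)=n+\phi(s)$. Its image is $\operatorname{im}\phi=\phi(S)$ and its kernel is $\ker\phi=\phi^{-1}(p)$. The symbol $\infty$ at the ends denotes the one-point $N$-set. A sequence $S_0\xrightarrow{\phi_1}S_1\xrightarrow{\phi_2}\cdots\xrightarrow{\phi_n}S_n$ of $N$-sets is exact if $\operatorname{im}\phi_k=\ker\phi_{k+1}$ for all $k$, and strongly exact if moreover each $\phi_k$ is injective on $S_{k-1}\setminus\ker\phi_k$. For a finite pointed set $S$, $\#S=|S|-1$. *)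

From mathcomp Require Import all_boot all_order all_algebra.
Set Implicit Arguments. Unset Strict Implicit. Unset Printing Implicit Defensive.

Definition is_binoid (N : Type) (add : N -> N -> N) (zero inf : N) : Prop :=
  [/\ forall a b c, add (add a b) c = add a (add b c),
      forall a b, add a b = add b a,
      forall a, add zero a = a
    & forall a, add a inf = inf].

Definition is_Nset (N : Type) (add : N -> N -> N) (zero inf : N)
  (S : Type) (p : S) (act : N -> S -> S) : Prop :=
  [/\ forall n m s, act (add n m) s = act n (act m s),
      forall s, act zero s = s,
      forall s, act inf s = p
    & forall n, act n p = p].

Definition is_Nhom (N : Type) (S T : Type) (pS : S) (actS : N -> S -> S)
  (pT : T) (actT : N -> T -> T) (f : S -> T) : Prop :=
  f pS = pT /\ forall n s, f (actS n s) = actT n (f s).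

Definition im_set (A B : finType) (f : A -> B) : {set B} := [set f a | a : A].
Definition ker_set (A B : finType) (f : A -> B) (pB : B) : {set A} :=
  [set a | f a == pB].

Definition sharp (A : finType) : int := (#|A|%:Z - 1)%R.

From mathcomp Require Import all_boot all_order all_algebra.
Set Implicit Arguments. Unset Strict Implicit. Unset Printing Implicit Defensive.
Import GRing.Theory.
Local Open Scope ring_scope.

(* Only the pointed-set structure matters.  Write c_k for the number of points
   of S_k outside the kernel of phi_k.  Strong exactness makes phi_k a bijection
   from those points onto the non-base points of its image, which is the kernel
   of phi_(k+1); hence #S_k = c_(k-1) + c_k.  The alternating sum telescopes to
   its two end terms, which vanish because S_0 and S_(n+1) are one-point sets. *)

Lemma sum_alternating_telescope (R : pzRingType) (a : nat -> R) (m : nat) :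
  \sum_(1 <= i < m.+1) (-1) ^+ i * (a i.-1 + a i) = (-1) ^+ m * a m - a 0%N.
Proof.
elim: m => [|m IH]; first by rewrite big_geq // expr0 mul1r subrr.
rewrite big_nat_recr //= IH exprS mulN1r mulNr mulrDr opprD addrAC addrA subrr.
by rewrite add0r mulNr.
Qed.

Section PointedMaps.

Variables (A B : finType) (f : A -> B) (pA : A) (pB : B).
Hypotheses (f_pointed : f pA = pB)
           (f_inj : {in ~: ker_set f pB &, injective f}).

Lemma im_set_pointed : im_set f = pB |: f @: (~: ker_set f pB).
Proof.
apply/setP => y; rewrite /im_set !inE; apply/imsetP/idP.
- case=> x _ ->; have [x_ker | x_nker] := boolP (x \in ker_set f pB).
    by rewrite inE in x_ker; rewrite x_ker.
  by apply/orP; right; apply: imset_f; rewrite inE.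
- by case/orP => [/eqP ->|/imsetP [x _ ->]]; [exists pA | exists x].
Qed.

Lemma card_im_set_pointed : #|im_set f| = (#|~: ker_set f pB|).+1.
Proof.
rewrite im_set_pointed cardsU1 card_in_imset //.
suff -> : (pB \in f @: ~: ker_set f pB) = false by [].
apply/negbTE/imsetP => -[x]; rewrite !inE => x_nker fx_eq.
by rewrite -fx_eq eqxx in x_nker.
Qed.

End PointedMaps.

Lemma sharp_exact (A B C : finType) (f : A -> B) (g : B -> C)
    (pA : A) (pB : B) (pC : C) :
  f pA = pB -> {in ~: ker_set f pB &, injective f} ->
  im_set f = ker_set g pC ->
  sharp B = (#|~: ker_set f pB|)%:Z + (#|~: ker_set g pC|)%:Z.
Proof.
move=> f_pointed f_inj exact_fg.
rewrite /sharp -(cardsC (ker_set g pC)) -exact_fg.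
rewrite (card_im_set_pointed f_pointed f_inj) -addn1 !PoszD.
by rewrite addrAC addrK.
Qed.

Lemma card_setC_ker_set_const (A B : finType) (f : A -> B) (pB : B) :
  (forall a, f a = pB) -> #|~: ker_set f pB| = 0%N.
Proof.
move=> f_const; apply/eqP; rewrite cards_eq0; apply/eqP/setP => a.
by rewrite !inE f_const eqxx.
Qed.

Theorem mainTheorem16
  (N : Type) (addN : N -> N -> N) (zeroN infN : N)
  (hN : is_binoid addN zeroN infN)
  (n : nat) (S : nat -> finType) (p : forall k, S k) (act : forall k, N -> S k -> S k)
  (hS : forall k, is_Nset addN zeroN infN (p k) (act k))
  (h0 : forall s : S 0%N, s = p 0%N)
  (hlast : forall s : S n.+1, s = p n.+1)
  (phi : forall k, S k -> S k.+1)
  (hphi : forall k, (k <= n)%N -> is_Nhom (p k) (act k) (p k.+1) (act k.+1) (phi k))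
  (hexact : forall k, (k < n)%N ->
       im_set (phi k) = ker_set (phi k.+1) (p k.+2))
  (hstrong : forall k, (k <= n)%N ->
       {in ~: ker_set (phi k) (p k.+1) &, injective (phi k)}) :
  \sum_(1 <= i < n.+1) (-1) ^+ i * sharp (S i) = 0.
Proof.
pose c k : int := (#|~: ker_set (phi k) (p k.+1)|)%:Z.
have sharpE i : (1 <= i < n.+1)%N -> sharp (S i) = c i.-1 + c i.
  case: i => // i /= lt_i_n.
  exact: sharp_exact (hphi i (ltnW lt_i_n)).1 (hstrong i (ltnW lt_i_n))
                     (hexact i lt_i_n).
rewrite (eq_big_nat _ _ (F2 := fun i => (-1) ^+ i * (c i.-1 + c i))); last first.
  by move=> i /sharpE ->.
rewrite sum_alternating_telescope.
have c0 : c 0%N = 0.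
  by rewrite /c card_setC_ker_set_const // => s; rewrite (h0 s) (hphi 0%N (leq0n n)).1.
have cn : c n = 0 by rewrite /c card_setC_ker_set_const.
by rewrite c0 cn mulr0 subr0.
Qed.
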